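(* Let $G=(V,E)$ be a block graph with $n=|V|\ge 2$ vertices, consisting of $r$ blocks whose numbers of vertices are $P_1,\dots,P_r$, and set $$\lambda_G=\sum_{i=1}^r \frac{P_i-1}{P_i}.$$ For a vertex $x\in V$ contained in exactly $s$ blocks, labeled $i_1,\dots,i_s$, set $$\beta_x=\Big(\sum_{j=1}^s \frac{1}{P_{i_j}}\Big)-(s-1).$$ Then the equation $DK=n\mathbf{1}_n$ has a unique solution $K$, and hence the Steinerberger curvature of every vertex $x\in V$ is $$K(x)=\frac{|V|\,\beta_x}{\lambda_G}.$$
   Context: All graphs are finite, simple, connected and undirected, with the combinatorial shortest-path distance $d$. For $G=(V,E)$ with $V=\{v_1,\dots,v_n\}$, let $D=(d(v_i,v_j))_{i,j=1}^n$ be its distance matrix and $\mathbf{1}_n\in\mathbb{R}^n$ the all-ones column vector. The Steinerberger curvature $K\in\mathbb{R}^n$ (written $K_i$ or $K(v_i)$) is defined as follows: if $DK=n\mathbf{1}_n$ has a unique solution, $K$ is that solution; if it has several solutions, $K$ is a solution for which $\min_i K_i$ is maximal; if it has no solution, $K=nD^\dagger\mathbf{1}_n$ with $D^\dagger$ the Moore–Penrose pseudoinverse. A block of a graph is a maximal connected subgraph without a cut vertex (maximal 2-connected subgraph; in particular a bridge together with its endpoints is a block). A block graph is a connected graph all of whose blocks are complete graphs (cliques). *)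

From HB Require Import structures.
From mathcomp Require Import all_boot all_order all_algebra.
Set Implicit Arguments. Unset Strict Implicit. Unset Printing Implicit Defensive.
Import Order.TTheory GRing.Theory Num.Theory.
Local Open Scope ring_scope.

(* A finite simple graph: vertex type T : finType, edge relation e : rel T,
   assumed symmetric and irreflexive in the theorem. *)
Section Graph.
Variables (T : finType) (e : rel T).

Definition walk_of_len (k : nat) (x y : T) : bool :=
  [exists p : k.-tuple T, path e x p && (last x p == y)].

(* Combinatorial shortest-path distance (for a connected graph every
   distance is < #|T|, so searching k in 0..#|T|-1 is exhaustive). *)
Definition dist (x y : T) : nat :=
  find (fun k => walk_of_len k x y) (iota 0 #|T|).

Definition induced (B : {set T}) : rel T :=
  fun u v => [&& u \in B, v \in B & e u v].

(* The subgraph induced on B is connected (the empty graph counts as connected). *)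
Definition induced_connected (B : {set T}) : bool :=
  [forall x in B, forall y in B, connect (induced B) x y].

Definition no_cut_connected (B : {set T}) : bool :=
  [&& B != set0, induced_connected B &
      [forall v in B, induced_connected (B :\ v)]].

(* A block: maximal connected subgraph without a cut vertex
   (maximal connected subgraphs without cut vertex are induced). *)
Definition is_block (B : {set T}) : bool := maxset no_cut_connected B.

Definition is_clique (B : {set T}) : bool :=
  [forall x in B, forall y in B, (x != y) ==> e x y].

Definition block_graph : Prop := forall B : {set T}, is_block B -> is_clique B.

Definition connected_graph : Prop := forall x y : T, connect e x y.

Definition distmx (R : nzRingType) : 'M[R]_#|T| :=
  \matrix_(i, j) (dist (enum_val i) (enum_val j))%:R.

Definition lambdaG (R : fieldType) : R :=
  \sum_(B : {set T} | is_block B) ((#|B|%:R - 1) / #|B|%:R).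

Definition betaG (R : fieldType) (x : T) : R :=
  (\sum_(B : {set T} | is_block B && (x \in B)) (#|B|%:R)^-1)
  - (#|[set B : {set T} | is_block B && (x \in B)]|%:R - 1).

End Graph.

From HB Require Import structures.
From mathcomp Require Import all_boot all_order all_algebra.
From mathcomp Require Import ring.
Import Order.TTheory GRing.Theory Num.Theory.
Set Implicit Arguments. Unset Strict Implicit. Unset Printing Implicit Defensive.

(* In a block graph every block [C] has, seen from any vertex [x], a gate [g] in [C]
   with [d(x,b) = d(x,g) + [b != g]] for all [b] in [C], and every vertex [y <> x] lies
   in exactly one block containing a vertex closer to [x] (its parent block).  Both
   facts rest on the vertex set of a simple cycle being a clique.  Summing the gate
   identity block by block gives [D beta = lambda 1] and [L D = beta 1^T - I], where
   [L u y] sums [[u == y] - 1/|C|] over the blocks [C] containing [u] and [y].  So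
   [beta beta^T / lambda - L] is a left inverse of [D] (as [lambda > 0] once [n >= 2]),
   and [n beta / lambda] is the unique solution of [D K = n 1]. *)

Lemma sum_constD1 (R : pzRingType) (I : finType) (A : {set I}) (F : I -> R) i0 c :
  i0 \in A -> {in A, forall i, i != i0 -> F i = c} ->
  (\sum_(i in A) F i = F i0 + (#|A|%:R - 1) * c)%R.
Proof.
move=> i0A Fc; rewrite (bigD1 i0) //=; congr (_ + _)%R.
rewrite (eq_bigr (fun _ => c)); last by move=> i /andP[iA ni]; apply: Fc.
rewrite sumr_const (cardD1 i0 A) i0A add1n -addn1 natrD GRing.addrK mulr_natl.
by apply: congr1; apply: eq_card => i; rewrite !inE andbC.
Qed.

Lemma sum_enum_val (R : nmodType) (T : finType) (F : T -> R) :
  (\sum_(k < #|T|) F (enum_val k) = \sum_y F y)%R.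
Proof. by rewrite [RHS](reindex _ (onW_bij _ (enum_val_bij T))). Qed.

Section BlockGraph.
Variables (T : finType) (e : rel T).
Hypotheses (e_sym : symmetric e) (e_irr : irreflexive e) (e_conn : connected_graph e).

(** * Shortest-path distance *)

Lemma walk_of_lenP k x y :
  reflect (exists p, [/\ size p = k, path e x p & last x p = y]) (walk_of_len e k x y).
Proof.
apply: (iffP existsP) => [[p /andP[pp /eqP lp]]|[p [sp pp lp]]].
  by exists p; rewrite size_tuple.
have sp' : size p == k by apply/eqP.
by exists (Tuple sp'); rewrite /= pp lp eqxx.
Qed.

Lemma short_walk x y : exists2 k, k < #|T| & walk_of_len e k x y.
Proof.
have /connectP[p pp ->] := e_conn x y.
have [p' pp' up' _] := shortenP pp.
exists (size p'); last by apply/walk_of_lenP; exists p'.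
by have := max_card (mem (x :: p')); rewrite (card_uniqP up').
Qed.

Lemma dist_lt_card x y : dist e x y < #|T|.
Proof.
have [k lt_k_T wk] := short_walk x y.
rewrite /dist -[X in _ < X](size_iota 0) -has_find.
by apply/hasP; exists k; rewrite ?mem_iota.
Qed.

Lemma walk_of_len_dist x y : walk_of_len e (dist e x y) x y.
Proof.
have := dist_lt_card x y; rewrite /dist -[X in _ < X](size_iota 0) -has_find.
by move/(nth_find 0); rewrite nth_iota ?add0n ?dist_lt_card.
Qed.

Lemma dist_min k x y : walk_of_len e k x y -> dist e x y <= k.
Proof.
move=> wk; have [lt_k_T|le_T_k] := ltnP k #|T|; last exact/ltnW/(leq_trans (dist_lt_card x y)).
rewrite leqNgt; apply/negP => /(before_find 0).
by rewrite nth_iota // add0n wk.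
Qed.

Lemma distP x y : exists p, [/\ size p = dist e x y, path e x p & last x p = y].
Proof. exact/walk_of_lenP/walk_of_len_dist. Qed.

Lemma dist_le_path x p : path e x p -> dist e x (last x p) <= size p.
Proof. by move=> pp; apply: dist_min; apply/walk_of_lenP; exists p. Qed.

Lemma dist_xx x : dist e x x = 0.
Proof. by apply/eqP; rewrite -leqn0 (dist_le_path (p := [::])). Qed.

Lemma dist0_eq x y : dist e x y = 0 -> x = y.
Proof. by move=> d0; have [[|z p] [/= sp _ <-]] := distP x y; rewrite // d0 in sp. Qed.

Lemma distC x y : dist e x y = dist e y x.
Proof.
suff le_dist a b : dist e a b <= dist e b a by apply/eqP; rewrite eqn_leq !le_dist.
have [p [<- pp <-]] := distP b a.
have rpp : path e (last b p) (rev (belast b p)).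
  by rewrite rev_path; apply: sub_path pp => u v; rewrite e_sym.
have := dist_le_path rpp; rewrite size_rev size_belast.
by case: p {pp rpp} => //= c p; rewrite rev_cons last_rcons.
Qed.

Lemma adj_neq x y : e x y -> x != y.
Proof. by apply: contraTneq => ->; rewrite e_irr. Qed.

Lemma dist_adj_le x y z : e y z -> dist e x z <= (dist e x y).+1.
Proof.
move=> eyz; have [p [<- pp lp]] := distP x y.
rewrite -(size_rcons p z) -[z in dist _ _ z](last_rcons x p).
by rewrite dist_le_path // rcons_path pp lp.
Qed.

Lemma dist_pred x y k : dist e x y = k.+1 -> exists2 p, e p y & dist e x p = k.
Proof.
move=> dk; have [p [sp pp lp]] := distP x y.
case/lastP: p sp pp lp => [|p a]; first by rewrite dk.
rewrite size_rcons rcons_path last_rcons dk => -[sp] /andP[pp ea] ay; subst y.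
exists (last x p) => //; apply/eqP; rewrite eqn_leq -{1}sp dist_le_path //=.
by rewrite -ltnS -dk dist_adj_le.
Qed.

(** * Cliques and blocks *)

Lemma induced_sym (S : {set T}) : symmetric (induced e S).
Proof. by move=> u v; rewrite /induced e_sym andbCA. Qed.

Lemma path_induced_connected (S : {set T}) a s :
  path e a s -> S =i a :: s -> induced_connected e S.
Proof.
move=> pp eqS.
have ppS : path (induced e S) a s.
  have : all (mem S) (a :: s) by apply/allP => y ys; rewrite inE eqS.
  elim: s a pp {eqS} => //= b s IH a /andP[eab pb] /and3P[aS bS sS].
  by rewrite /induced aS bS eab IH //= bS.
have connect_a y : y \in S -> connect (induced e S) a y.
  by rewrite eqS; apply: path_connect.
apply/forall_inP => y yS; apply/forall_inP => z zS.
apply: connect_trans (connect_a _ zS).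
by rewrite (sym_connect_sym (@induced_sym S)) connect_a.
Qed.

Lemma cliqueP (B : {set T}) :
  reflect {in B &, forall x y, x != y -> e x y} (is_clique e B).
Proof.
apply: (iffP forall_inP) => [cB x y xB yB | cB x xB].
  exact/implyP/(forall_inP (cB x xB)).
by apply/forall_inP => y yB; apply/implyP; apply: cB.
Qed.

Lemma clique_subset (A B : {set T}) : is_clique e B -> A \subset B -> is_clique e A.
Proof.
move=> /cliqueP cB /subsetP sAB; apply/cliqueP => x y xA yA.
by apply: cB; apply: sAB.
Qed.

Lemma clique_induced_connected (B : {set T}) : is_clique e B -> induced_connected e B.
Proof.
move=> /cliqueP cB; apply/forall_inP => x xB; apply/forall_inP => y yB.
have [->|nxy] := eqVneq x y; first exact: connect0.
by apply: connect1; rewrite /induced xB yB cB.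
Qed.

Lemma clique_no_cut_connected (B : {set T}) :
  B != set0 -> is_clique e B -> no_cut_connected e B.
Proof.
move=> B0 cB; rewrite /no_cut_connected B0 clique_induced_connected //=.
apply/forall_inP => v _; apply: clique_induced_connected.
by apply: clique_subset cB _; apply: subsetDl.
Qed.

Hypothesis e_block : block_graph e.

Lemma no_cut_connected_in_block (S : {set T}) :
  no_cut_connected e S -> exists2 B, is_block e B & S \subset B.
Proof. by case/maxset_exists => B; exists B. Qed.

Lemma no_cut_connected_clique (S : {set T}) : no_cut_connected e S -> is_clique e S.
Proof. by case/no_cut_connected_in_block => B /e_block; apply: clique_subset. Qed.

Lemma block_neq0 (B : {set T}) : is_block e B -> B != set0.
Proof. by case/maxsetP => /and3P[]. Qed.

Lemma block_adj (B : {set T}) x y : is_block e B -> x \in B -> y \in B -> x != y -> e x y.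
Proof. by move/e_block/cliqueP; apply. Qed.

Lemma block_maximal (B D : {set T}) : is_block e B -> is_clique e D -> B \subset D -> D = B.
Proof.
move=> bB cD sBD; apply: (maxsetsup bB) => //; apply: clique_no_cut_connected cD.
by apply: contraNneq (block_neq0 bB) => D0; rewrite -subset0 -D0.
Qed.

Lemma adj_block_mem (B : {set T}) w :
  is_block e B -> {in B, forall b, b != w -> e w b} -> w \in B.
Proof.
move=> bB adj_w; suff <- : w |: B = B by apply: setU11.
apply: block_maximal (subsetUr _ _) => //; apply/cliqueP => x y.
rewrite !in_setU1 => /predU1P[->|xB] /predU1P[->|yB]; rewrite ?eqxx // => nxy.
- by apply: adj_w; rewrite // eq_sym.
- by rewrite e_sym adj_w.
- exact: block_adj bB xB yB nxy.
Qed.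

Lemma adj_in_block u v : e u v -> exists2 B, is_block e B & (u \in B) && (v \in B).
Proof.
move=> euv; have [|B bB /subsetP uvB] := @no_cut_connected_in_block [set u; v].
  apply: clique_no_cut_connected; first by apply/set0Pn; exists u; rewrite !inE eqxx.
  apply/cliqueP => x y; rewrite !inE.
  by do 2!case/orP => /eqP->; rewrite ?eqxx // e_sym.
by exists B; rewrite // !uvB // !inE eqxx ?orbT.
Qed.

(* A simple cycle is 2-connected, hence lies inside a block. *)
Lemma cycle_clique c : uniq c -> cycle e c -> is_clique e [set x in c].
Proof.
case: c => [|a s] uc cc; first by apply/cliqueP => x y; rewrite inE.
apply/no_cut_connected_clique/and3P; split.
- by apply/set0Pn; exists a; rewrite inE mem_head.
- move: cc; rewrite /= rcons_path => /andP[pp _].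
  by apply: (path_induced_connected pp) => y; rewrite inE.
apply/forall_inP => v; rewrite inE => vc.
have [i t rot_c] := rot_to vc.
have /andP[vt _] : uniq (v :: t) by rewrite -rot_c rot_uniq.
have : cycle e (v :: t) by rewrite -rot_c rot_cycle.
have mem_t : [set x in a :: s] :\ v =i t.
  move=> y; rewrite in_setD1 in_set -(mem_rot i) rot_c in_cons.
  by case: eqVneq => [->|]; rewrite ?(negbTE vt).
case: t {rot_c} vt mem_t => [|b t] _ mem_t.
  by move=> _; apply/forall_inP => x; rewrite mem_t.
rewrite /= rcons_path => /and3P[_ pp _].
exact: path_induced_connected pp mem_t.
Qed.

Lemma four_cycle_chord a b c d :
  e a b -> e b c -> e c d -> e d a -> a != c -> b != d -> e a c.
Proof.
move=> eab ebc ecd eda nac nbd.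
have uc : uniq [:: a; b; c; d].
  by rewrite /= !inE !negb_or nac nbd [a == d]eq_sym !adj_neq.
have /cliqueP : is_clique e [set x in [:: a; b; c; d]].
  by apply: cycle_clique; rewrite //= eab ebc ecd eda.
by apply; rewrite // !inE eqxx ?orbT.
Qed.

Lemma block_eq (B1 B2 : {set T}) u v : is_block e B1 -> is_block e B2 -> u != v ->
  u \in B1 -> v \in B1 -> u \in B2 -> v \in B2 -> B1 = B2.
Proof.
move=> bB1 bB2 nuv u1 v1 u2 v2; apply: (block_maximal bB2 (e_block bB1)).
apply/subsetP => w w2; apply: (adj_block_mem bB1) => b b1 nbw.
have [w1|w1] := boolP (w \in B1); first by apply: (block_adj bB1); rewrite // eq_sym.
have [bu|nbu] := eqVneq b u; first by subst b; apply: (block_adj bB2); rewrite // eq_sym.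
have [bv|nbv] := eqVneq b v; first by subst b; apply: (block_adj bB2); rewrite // eq_sym.
apply: (@four_cycle_chord w u b v) => //.
- by apply: (block_adj bB2) => //; apply: contraNneq w1 => ->.
- by apply: (block_adj bB1); rewrite // eq_sym.
- exact: (block_adj bB1).
- by apply: (block_adj bB2) => //; apply: contraNneq w1 => <-.
- by apply: contraNneq w1 => ->.
Qed.

(** * Gates and parent blocks *)

(* Induction on the common distance [m]: the predecessors of [p] and [q] close the
   path into a longer one at level [m - 1], and the resulting cycle is a clique. *)
Lemma equidistant_far_path_adj x m p q s :
  p != q -> dist e x p = m -> dist e x q = m -> path e p (rcons s q) ->
  uniq (p :: rcons s q) -> all (fun y => m < dist e x y) s -> e p q.
Proof.
elim: m p q s => [|k IH] p q s npq dp dq pp up far.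
  by move: npq; rewrite -(dist0_eq dp) -(dist0_eq dq) eqxx.
have [p' ep'p dp'] := dist_pred dp; have [q' eq'q dq'] := dist_pred dq.
move def_c: (p :: rcons s q) => c.
have last_c : last p' c = q by rewrite -def_c /= last_rcons.
have far_c : all (fun y => k < dist e x y) c.
  rewrite -def_c /= all_rcons dp dq ltnSn /=.
  by apply: sub_all far => y /ltnW.
have not_in_c y : dist e x y = k -> y \notin c.
  by move=> dy; apply/negP => /(allP far_c); rewrite /= dy ltnn.
have pc : path e p' c by rewrite -def_c /= ep'p.
have p_in_c : p \in c by rewrite -def_c mem_head.
have q_in_c : q \in c by rewrite -def_c in_cons mem_rcons mem_head orbT.
have [eq_p'q'|np'q'] := eqVneq p' q'.
  have /cliqueP : is_clique e [set y in p' :: c].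
    apply: cycle_clique; first by rewrite cons_uniq not_in_c // -def_c.
    by rewrite /= rcons_path pc last_c e_sym eq_p'q'.
  by apply; rewrite // inE in_cons ?p_in_c ?q_in_c orbT.
have up' : uniq (p' :: rcons c q').
  by rewrite cons_uniq rcons_uniq mem_rcons in_cons negb_or np'q' !not_in_c // -def_c.
have pc' : path e p' (rcons c q') by rewrite rcons_path pc last_c e_sym.
have ep'q' := IH p' q' c np'q' dp' dq' pc' up' far_c.
have /cliqueP : is_clique e [set y in p' :: rcons c q'].
  by apply: cycle_clique; rewrite //= rcons_path pc' last_rcons e_sym.
by apply; rewrite // inE in_cons mem_rcons in_cons ?p_in_c ?q_in_c !orbT.
Qed.

Lemma adj_equidistant_common_pred x y z : e y z -> dist e x y = dist e x z ->
  exists w, [/\ e w y, e w z & (dist e x w).+1 = dist e x y].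
Proof.
move=> eyz dyz; case dy: (dist e x y) dyz => [|k] dz.
  by move: (adj_neq eyz); rewrite -(dist0_eq dy) -(dist0_eq (esym dz)) eqxx.
have [y' ey'y dy'] := dist_pred dy; have [z' ez'z dz'] := dist_pred (esym dz).
exists y'; split; rewrite ?dy' //.
have [->//|ny'z'] := eqVneq y' z'.
have neq_dist a b : dist e x a != dist e x b -> a != b by apply: contraNneq => ->.
have ny'z : y' != z by rewrite neq_dist // dy' -dz ltn_eqF.
have nyz' : y != z' by rewrite neq_dist // dy dz' eq_sym ltn_eqF.
apply: (@four_cycle_chord y' y z z') => //; first by rewrite e_sym.
rewrite e_sym; apply: (@equidistant_far_path_adj x k y' z' [:: y; z]) => //=.
- by rewrite ey'y eyz (e_sym z) ez'z.
- rewrite !inE !negb_or ny'z' ny'z nyz' (adj_neq ey'y) (adj_neq eyz) /=.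
  by rewrite eq_sym adj_neq.
- by rewrite dy -dz ltnSn.
Qed.

Lemma equidistant_preds_adj x y c w : e c y -> e w y -> dist e x c = dist e x w ->
  (dist e x c).+1 = dist e x y -> c != w -> e c w.
Proof.
move=> ecy ewy dcw dcy ncw.
apply: (@equidistant_far_path_adj x (dist e x c) c w [:: y]) => //=.
- by rewrite ecy (e_sym y) ewy.
- by rewrite !inE !negb_or ncw (adj_neq ecy) eq_sym (adj_neq ewy).
- by rewrite -dcy ltnSn.
Qed.

Lemma block_gate x (C : {set T}) : is_block e C ->
  exists2 g, g \in C & {in C, forall b, dist e x b = dist e x g + (b != g)}.
Proof.
move=> bC; have /set0Pn[y0 y0C] := block_neq0 bC.
have [g gC gmin] := arg_minnP (dist e x) y0C.
exists g => // b bC'; have [->|nbg] := eqVneq b g; first by rewrite addn0.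
have egb : e g b by apply: (block_adj bC); rewrite // eq_sym.
have := gmin b bC'; rewrite leq_eqVlt => /orP[/eqP eq_gb|lt_gb]; last first.
  by apply/eqP; rewrite addn1 eqn_leq lt_gb dist_adj_le.
have [w [ewg ewb dw]] := adj_equidistant_common_pred egb eq_gb.
suff wC : w \in C by have := gmin w wC; rewrite -dw ltnn.
apply: (adj_block_mem bC) => c cC ncw.
have [->//|ncg] := eqVneq c g; have [->//|ncb] := eqVneq c b.
apply: (@four_cycle_chord w g c b) => //.
- by apply: (block_adj bC); rewrite // eq_sym.
- exact: (block_adj bC).
- by rewrite e_sym.
- by rewrite eq_sym.
- by rewrite eq_sym.
Qed.

(* For [y \in C]: a shortest path from [x] enters [y] through [C]. *)
Definition parent_block x (C : {set T}) y : bool :=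
  [exists c in C, dist e x c < dist e x y].

Lemma parent_block_gate x (C : {set T}) g y : g \in C ->
  {in C, forall b, dist e x b = dist e x g + (b != g)} -> y \in C ->
  parent_block x C y = (y != g).
Proof.
move=> gC gateC yC; rewrite /parent_block gateC //.
case: eqVneq => [_|_] /=; last by apply/exists_inP; exists g; rewrite // addn1.
by apply/exists_inP => -[c cC]; rewrite gateC // addn0 ltnNge leq_addr.
Qed.

Lemma parent_block_exists x y : x != y ->
  exists2 C, is_block e C & (y \in C) && parent_block x C y.
Proof.
move=> nxy; case dy: (dist e x y) => [|k]; first by rewrite (dist0_eq dy) eqxx in nxy.
have [p epy dp] := dist_pred dy; have [C bC /andP[pC yC]] := adj_in_block epy.
by exists C; rewrite // yC; apply/exists_inP; exists p; rewrite // dp dy.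
Qed.

Lemma parent_block_unique x y (C1 C2 : {set T}) : is_block e C1 -> is_block e C2 ->
  y \in C1 -> y \in C2 -> parent_block x C1 y -> parent_block x C2 y -> C1 = C2.
Proof.
move=> bC1 bC2 y1 y2.
have [g1 g1C gate1] := block_gate x bC1; have [g2 g2C gate2] := block_gate x bC2.
rewrite (parent_block_gate g1C gate1 y1) (parent_block_gate g2C gate2 y2) => ny1 ny2.
have d1 : dist e x y = (dist e x g1).+1 by rewrite gate1 // ny1 addn1.
have d2 : dist e x y = (dist e x g2).+1 by rewrite gate2 // ny2 addn1.
have e1 : e g1 y by apply: (block_adj bC1); rewrite // eq_sym.
have e2 : e g2 y by apply: (block_adj bC2); rewrite // eq_sym.
have [eq_g|ng] := eqVneq g1 g2; first by rewrite -eq_g in g2C; apply: (block_eq bC1 bC2 ny1).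
have eg12 : e g1 g2.
  by apply: (equidistant_preds_adj (x := x) e1 e2) => //; apply: succn_inj; rewrite -d1 -d2.
suff g2C1 : g2 \in C1 by apply: (block_eq bC1 bC2 ny2).
apply: (adj_block_mem bC1) => b bC ngb.
have [->|nbg1] := eqVneq b g1; first by rewrite e_sym.
have [->//|nby] := eqVneq b y.
apply: (@four_cycle_chord g2 g1 b y) => //; first by rewrite e_sym.
- by apply: (block_adj bC1); rewrite // eq_sym.
- exact: (block_adj bC1).
- by rewrite e_sym.
- by rewrite eq_sym.
- by rewrite eq_sym.
Qed.

(** * The inverse of the distance matrix *)

Local Open Scope ring_scope.
Variable R : numFieldType.

Lemma block_card_neq0 (C : {set T}) : is_block e C -> (#|C|%:R : R) != 0.
Proof. by move=> bC; rewrite pnatr_eq0 -lt0n card_gt0 block_neq0. Qed.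

Lemma dist_sub_block_mean x (C : {set T}) u : is_block e C -> u \in C ->
  (dist e x u)%:R - (\sum_(y in C) (dist e x y)%:R) / #|C|%:R
  = (parent_block x C u)%:R + (#|C|%:R)^-1 - 1 :> R.
Proof.
move=> bC uC; have [g gC gateC] := block_gate x bC.
rewrite (parent_block_gate gC gateC uC) gateC //.
rewrite (sum_constD1 (c := (dist e x g).+1%:R) gC); last first.
  by move=> y yC nyg; rewrite gateC // nyg addn1.
have := block_card_neq0 bC; rewrite gateC // eqxx addn0 -natr1 natrD.
by case: (u != g) => /= ?; field.
Qed.

Lemma sum_block_dist_parent x (C : {set T}) : is_block e C ->
  \sum_(y in C) (dist e x y)%:R * ((parent_block x C y)%:R + (#|C|%:R)^-1 - 1)
  = (#|C|%:R - 1) / #|C|%:R :> R.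
Proof.
move=> bC; have [g gC gateC] := block_gate x bC.
rewrite (sum_constD1 (c := (dist e x g).+1%:R * (#|C|%:R)^-1) gC); last first.
  move=> y yC nyg; rewrite (parent_block_gate gC gateC yC) gateC // nyg addn1 /=.
  by rewrite addrAC subrr add0r.
rewrite (parent_block_gate gC gateC gC) gateC // eqxx addn0 -addn1 natrD.
by have := block_card_neq0 bC => ? /=; field.
Qed.

Lemma sum_parent_block x y :
  \sum_(C : {set T} | is_block e C && (y \in C)) (parent_block x C y)%:R = (x != y)%:R :> R.
Proof.
have [<-|nxy] := eqVneq x y.
  rewrite big1 // => C _; apply/eqP; rewrite pnatr_eq0 eqb0.
  by apply/exists_inP => -[c _]; rewrite dist_xx ltn0.
have [C0 bC0 /andP[yC0 pC0]] := parent_block_exists nxy.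
rewrite (bigD1 C0) ?bC0 ?yC0 //= pC0 big1 ?addr0 // => C /andP[/andP[bC yC] nC].
apply/eqP; rewrite pnatr_eq0 eqb0; apply: contra nC => pC.
by rewrite (parent_block_unique bC bC0 yC yC0 pC pC0).
Qed.

Lemma betaGE y : betaG e R y =
  1 + \sum_(C : {set T} | is_block e C && (y \in C)) ((#|C|%:R)^-1 - 1).
Proof. by rewrite /betaG sumrB sumr_const cardsE opprB addrCA. Qed.

Lemma exchange_block_sum (P : pred {set T}) (F : T -> {set T} -> R) :
  \sum_y \sum_(C : {set T} | P C && (y \in C)) F y C
  = \sum_(C : {set T} | P C) \sum_(y in C) F y C.
Proof.
under eq_bigr do rewrite big_mkcondr.
by rewrite exchange_big; apply: eq_bigr => C _; rewrite [RHS]big_mkcond.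
Qed.

Lemma sum_dist_betaG x : \sum_y (dist e x y)%:R * betaG e R y = lambdaG e R.
Proof.
have distE y : (dist e x y)%:R = (dist e x y)%:R * (x != y)%:R :> R.
  by have [<-|_] := eqVneq x y; rewrite ?dist_xx ?mul0r ?mulr1.
under eq_bigr => y _.
  rewrite betaGE mulrDr mulr1 {1}distE -sum_parent_block !mulr_sumr -big_split /=.
  under eq_bigr do rewrite -mulrDr addrA.
  over.
by rewrite exchange_block_sum; apply: eq_bigr => C; apply: sum_block_dist_parent.
Qed.

Definition block_laplacian u y : R :=
  \sum_(C : {set T} | (is_block e C && (u \in C)) && (y \in C))
    ((u == y)%:R - (#|C|%:R)^-1).

Lemma sum_block_laplacian_dist u w :
  \sum_y block_laplacian u y * (dist e y w)%:R = betaG e R u - (u == w)%:R.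
Proof.
have blockE (C : {set T}) : is_block e C && (u \in C) ->
    \sum_(y in C) ((u == y)%:R - (#|C|%:R)^-1) * (dist e y w)%:R
    = (parent_block w C u)%:R + (#|C|%:R)^-1 - 1 :> R.
  case/andP=> bC uC; rewrite -(dist_sub_block_mean w bC uC).
  under eq_bigr do rewrite mulrBl.
  rewrite sumrB (bigD1 u) //= eqxx mul1r big1 => [|y /andP[_ nyu]]; last first.
    by rewrite eq_sym (negbTE nyu) mul0r.
  rewrite addr0 distC -mulr_sumr [_^-1 * _]mulrC.
  by congr (_ - _ * _); apply: eq_bigr => y _; rewrite distC.
under eq_bigr do rewrite mulr_suml.
rewrite exchange_block_sum (eq_bigr _ blockE) !big_split /= sum_parent_block.
rewrite betaGE sumrB sumrN.
by case: eqVneq => _; rewrite /= ?mulr1n ?mulr0n; ring.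
Qed.

Lemma lambdaG_gt0 : (1 < #|T|)%N -> 0 < lambdaG e R.
Proof.
case/card_gt1P => x [y [_ _ nxy]].
have [C0 bC0 /andP[yC0 /exists_inP[c cC0 lt_cy]]] := parent_block_exists nxy.
have C0_gt1 : (1 < #|C0|)%N.
  by apply/card_gt1P; exists c, y; split=> //; apply: contraTneq lt_cy => ->; rewrite ltnn.
rewrite /lambdaG (bigD1 C0) //=; apply: ltr_pwDl.
  by rewrite divr_gt0 ?subr_gt0 ?ltr1n ?ltr0n // ltnW.
apply: sumr_ge0 => C /andP[bC _]; rewrite divr_ge0 // subr_ge0 ler1n.
by rewrite card_gt0 block_neq0.
Qed.

Definition distmx_inv : 'M[R]_#|T| := \matrix_(i, j)
  (betaG e R (enum_val i) * betaG e R (enum_val j) / lambdaG e R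
   - block_laplacian (enum_val i) (enum_val j)).

Lemma mul_distmx_inv : (1 < #|T|)%N -> distmx_inv *m distmx e R = 1%:M.
Proof.
move=> T_gt1; have lambda_neq0 := lt0r_neq0 (lambdaG_gt0 T_gt1).
apply/matrixP => i j; set u := enum_val i; set w := enum_val j.
rewrite !mxE -(inj_eq enum_val_inj) -/u -/w.
under eq_bigr do rewrite !mxE.
rewrite (sum_enum_val (fun y =>
  (betaG e R u * betaG e R y / lambdaG e R - block_laplacian u y) * (dist e y w)%:R)).
under eq_bigr do rewrite mulrBl.
rewrite sumrB sum_block_laplacian_dist.
have -> : \sum_y betaG e R u * betaG e R y / lambdaG e R * (dist e y w)%:R
          = betaG e R u / lambdaG e R * \sum_y (dist e w y)%:R * betaG e R y.
  by rewrite mulr_sumr; apply: eq_bigr => y _; rewrite distC; ring.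
by rewrite sum_dist_betaG divfK // subKr.
Qed.

Lemma distmx_mul_curvature (n : R) : (1 < #|T|)%N ->
  distmx e R *m \col_i (n * betaG e R (enum_val i) / lambdaG e R) = const_mx n.
Proof.
move=> T_gt1; have lambda_neq0 := lt0r_neq0 (lambdaG_gt0 T_gt1).
apply/matrixP => i j; set u := enum_val i; rewrite !mxE.
under eq_bigr do rewrite !mxE.
rewrite (sum_enum_val (fun y => (dist e u y)%:R * (n * betaG e R y / lambdaG e R))).
rewrite (eq_bigr (fun y => n / lambdaG e R * ((dist e u y)%:R * betaG e R y))); last first.
  by move=> y _; ring.
by rewrite -mulr_sumr sum_dist_betaG divfK.
Qed.

End BlockGraph.

Local Open Scope ring_scope.

Theorem mainTheorem1 (R : realFieldType) (T : finType) (e : rel T)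
  (e_sym : symmetric e) (e_irr : irreflexive e)
  (e_conn : connected_graph e) (e_block : block_graph e)
  (n_ge2 : (2 <= #|T|)%N) :
  (exists! K : 'cV[R]_#|T|, distmx e R *m K = const_mx (#|T|%:R)) /\
  (forall K : 'cV[R]_#|T|, distmx e R *m K = const_mx (#|T|%:R) ->
     forall i : 'I_#|T|,
       K i 0 = #|T|%:R * betaG e R (enum_val i) / lambdaG e R).
Proof.
pose K0 : 'cV[R]_#|T| := \col_i (#|T|%:R * betaG e R (enum_val i) / lambdaG e R).
have DK0 : distmx e R *m K0 = const_mx #|T|%:R :=
  distmx_mul_curvature e_sym e_irr e_conn e_block _ n_ge2.
have invD := mul_distmx_inv e_sym e_irr e_conn e_block R n_ge2.
have solE K : distmx e R *m K = const_mx #|T|%:R -> K = K0.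
  by move=> DK; rewrite -[K]mul1mx -invD -mulmxA DK -DK0 mulmxA invD mul1mx.
split; first by exists K0; split=> // K /solE.
by move=> K /solE -> i; rewrite mxE.
Qed.
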